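(* Let $A\in\mathbb{R}^{10\times10}$ be the coefficient matrix of SSPERK$(10,4)$: $a_{ij}=\frac16$ for $1\le j<i\le5$; $a_{ij}=\frac1{15}$ for $6\le i\le 10$, $1\le j\le 5$; $a_{ij}=\frac16$ for $6\le j<i\le 10$; all other entries zero. Let $c=A\mathbf e$. If $\tilde b\in\mathbb{R}^{10}$ satisfies the third-order conditions $$\tilde b^T\mathbf e=1,\quad \tilde b^Tc=\tfrac12,\quad \tilde b^Tc^2=\tfrac13,\quad \tilde b^T\Big(\tfrac{c^2}{2}-Ac\Big)=0,$$ then it also satisfies the fourth-order condition $\tilde b^T\big(\frac{c^3}{6}-\frac{Ac^2}{2}\big)=0$. In particular no embedded third-order weight vector for SSPERK$(10,4)$ can violate all fourth-order conditions.
   Context: $\mathbf e=(1,\dots,1)^T$; powers of vectors such as $c^2,c^3$ are taken componentwise. *)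

(* Statement over the reals; the claim is purely algebraic,
   so it is stated for an arbitrary real field R (includes the reals). *)
From HB Require Import structures.
From mathcomp Require Import all_boot all_order all_algebra.
Set Implicit Arguments. Unset Strict Implicit. Unset Printing Implicit Defensive.
Import Order.TTheory GRing.Theory Num.Theory.
Local Open Scope ring_scope.

(* Coefficient matrix of SSPERK(10,4), 0-based indices:
   paper (i,j) with 1<=j<i<=5  <-> i,j : 'I_10 with j < i <= 4      : 1/6
   paper 6<=i<=10, 1<=j<=5     <-> 5 <= i, j <= 4                   : 1/15
   paper 6<=j<i<=10            <-> 5 <= j < i                       : 1/6
   otherwise 0. *)
Definition ssperk104_A (R : fieldType) : 'M[R]_10 :=
  \matrix_(i < 10, j < 10)
    (if ((j < i)%N && (i <= 4)%N) then 6%:R^-1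
     else if ((5 <= i)%N && (j <= 4)%N) then 15%:R^-1
     else if ((5 <= j)%N && (j < i)%N) then 6%:R^-1
     else 0).

Definition evec (R : fieldType) (n : nat) : 'cV[R]_n := const_mx 1.

Definition cpow (R : fieldType) (n : nat) (v : 'cV[R]_n) (k : nat) : 'cV[R]_n :=
  map_mx (fun x => x ^+ k) v.

Definition dotv (R : fieldType) (n : nat) (b x : 'cV[R]_n) : R :=
  (b^T *m x) 0 0.

(* For SSPERK(10,4) the fourth-order residual vector c^3/6 - A c^2/2 lies in
   the span of c, c^2 and the third-order residual c^2/2 - A c:
     c^3/6 - A c^2/2 = -c/36 + c^2/24 + 11/36 (c^2/2 - A c).
   Pairing with b~ and using the third-order conditions gives
   -1/72 + 1/72 + 0 = 0. *)
From HB Require Import structures.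
From mathcomp Require Import all_boot all_order all_algebra.
From mathcomp Require Import lra.
Import Order.TTheory GRing.Theory Num.Theory.
Local Open Scope ring_scope.

Lemma dotvD (R : fieldType) (n : nat) (b u v : 'cV[R]_n) :
  dotv b (u + v) = dotv b u + dotv b v.
Proof. by rewrite /dotv mulmxDr mxE. Qed.

Lemma dotvZ (R : fieldType) (n : nat) (b u : 'cV[R]_n) (a : R) :
  dotv b (a *: u) = a * dotv b u.
Proof. by rewrite /dotv -scalemxAr mxE. Qed.

Lemma ssperk104_abscissa (R : realFieldType) (i : 'I_10) :
  (ssperk104_A R *m evec R 10) i 0 =
    (if (i <= 4)%N then i : nat else (i - 3)%N)%:R / 6%:R.
Proof.
rewrite mxE !big_ord_recr big_ord0 /=.
case: i => [[|[|[|[|[|[|[|[|[|[|m]]]]]]]]]] Hi] //;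
  rewrite /ssperk104_A /evec !mxE ?subnE /=; lra.
Qed.

Lemma ssperk104_order4_residual (R : realFieldType) :
  let A := ssperk104_A R in
  let c := A *m evec R 10 in
  6%:R^-1 *: cpow c 3 - 2%:R^-1 *: (A *m cpow c 2) =
    (- 36%:R^-1) *: c + 24%:R^-1 *: cpow c 2
    + (11%:R / 36%:R) *: (2%:R^-1 *: cpow c 2 - A *m c).
Proof.
move=> A c.
have c_val : forall j, c j 0 = _ := ssperk104_abscissa R.
clearbody c; apply/matrixP => i k; rewrite (ord1 k) {k} !mxE c_val.
under eq_bigr => j _ do rewrite [cpow _ _ _ _]mxE c_val.
under [X in _ = _ + _ * (_ - X)]eq_bigr => j _ do rewrite c_val.
rewrite !big_ord_recr !big_ord0 /=.
case: i => [[|[|[|[|[|[|[|[|[|[|m]]]]]]]]]] Hi] //;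
  rewrite /A /ssperk104_A !mxE ?subnE /=; lra.
Qed.

Theorem mainTheorem4 (R : realFieldType) (bt : 'cV[R]_10) :
  let A := ssperk104_A R in
  let e := evec R 10 in
  let c := A *m e in
  dotv bt e = 1 ->
  dotv bt c = 2%:R^-1 ->
  dotv bt (cpow c 2) = 3%:R^-1 ->
  dotv bt (2%:R^-1 *: cpow c 2 - A *m c) = 0 ->
  dotv bt (6%:R^-1 *: cpow c 3 - 2%:R^-1 *: (A *m cpow c 2)) = 0.
Proof.
move=> A e c _ b_c b_c2 b_res3.
rewrite ssperk104_order4_residual !dotvD !dotvZ b_c b_c2 b_res3.
lra.
Qed.
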